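(* Let $K\ge2$ and $T^K:=\{v\in\mathbb{R}^K:\|v\|_1=1,\ \sum_{k=1}^Kv_k=0\}$. For $\beta>0$ let $\|v\|_\beta=\left(\sum_{k=1}^K|v_k|^\beta\right)^{1/\beta}$. (1) If $0<\beta<1$, then $\min_{v\in T^K}\|v\|_\beta=2^{\frac1\beta-1}$, and the minimum is attained at the vector $v$ with $v_1=-\tfrac12$, $v_2=\tfrac12$ and $v_k=0$ for $k\ge3$. (2) If $\beta>1$, then \[ \min_{v\in T^K}\|v\|_\beta=\frac12\left(\left\lfloor\tfrac K2\right\rfloor^{1-\beta}+\left\lceil\tfrac K2\right\rceil^{1-\beta}\right)^{1/\beta}, \] and the minimum is attained at the vector $v$ with $v_k=\frac{1}{2\lfloor K/2\rfloor}$ for $1\le k\le\lfloor K/2\rfloor$ and $v_k=-\frac{1}{2\lceil K/2\rceil}$ for $\lfloor K/2\rfloor<k\le K$.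
   Context: $\|v\|_1=\sum_k|v_k|$. *)

From mathcomp Require Import all_boot all_order all_algebra.
From mathcomp Require Import all_classical all_reals all_analysis.
Unset Printing Implicit Defensive.
Import Order.TTheory GRing.Theory Num.Theory.
Local Open Scope ring_scope.
Local Open Scope classical_set_scope.

(* Vectors in R^K are functions 'I_K -> R; index k (0-based) corresponds to
   the paper's index k+1. *)

Definition TK (R : realType) (K : nat) : set ('I_K -> R) :=
  [set v | \sum_(k < K) `|v k| = 1 /\ \sum_(k < K) v k = 0].

Definition bnorm (R : realType) (K : nat) (beta : R) (v : 'I_K -> R) : R :=
  (\sum_(k < K) `|v k| `^ beta) `^ (beta^-1).

Definition vsmall (R : realType) (K : nat) : 'I_K -> R :=
  fun k => if val k == 0%N then - 2^-1 else if val k == 1%N then 2^-1 else 0.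

Definition vbig (R : realType) (K : nat) : 'I_K -> R :=
  fun k => if (val k < K./2)%N then (2 * (K./2)%:R)^-1
           else - (2 * (uphalf K)%:R)^-1.

From mathcomp Require Import all_boot all_order all_algebra.
From mathcomp Require Import all_classical all_reals all_analysis.
From mathcomp Require Import ring lra zify.
Import Order.TTheory GRing.Theory Num.Theory.
Local Open Scope ring_scope.
Local Open Scope classical_set_scope.

(* The constraints force the positive coordinates of v in T^K to have absolute
   values summing to 1/2, and likewise the non-positive ones; in particular
   every |v_k| is at most 1/2.
   For beta < 1, x^beta lies above its chord 2^(1-beta) x on [0, 1/2], so
   sum_k |v_k|^beta >= 2^(1-beta) * ||v||_1 = 2^(1-beta).
   For beta > 1, convexity (tangent lines at the mean) bounds the power sum over
   a sign class of n coordinates below by n (1/(2n))^beta = 2^-beta n^(1-beta);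
   with p positive and q = K - p non-positive coordinates, convexity of
   n |-> n^(1-beta) shows p^(1-beta) + q^(1-beta) is least for the balanced
   split p, q = floor(K/2), ceil(K/2). *)

Section PowerInequalities.
Context {R : realType}.
Implicit Types r x y z a c g : R.

Lemma powR_bernoulli_ge1 r z : 1 <= r -> 0 <= z -> 1 + r * (z - 1) <= z `^ r.
Proof.
move=> r1 z0; have [<-|r1'] := eqVneq 1 r; first by rewrite powRr1 // mul1r addrC subrK.
have {r1'}r1_lt : 1 < r by rewrite lt_neqAle r1' r1.
have r0 : 0 < r by apply: lt_le_trans r1.
have q0 : 0 < r / (r - 1) by rewrite divr_gt0 // subr_gt0.
have pq : r^-1 + (r / (r - 1))^-1 = 1.
  by rewrite invf_div; field; rewrite !gt_eqF // subr_gt0.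
(* Young's inequality for [z * 1] with the conjugate exponents [r] and [r / (r - 1)] *)
have := conjugate_powR z0 ler01 r0 q0 pq.
rewrite powR1 invf_div mulr1 mul1r.
have -> : z `^ r / r + (r - 1) / r = (z `^ r + r - 1) / r by field; rewrite gt_eqF.
by rewrite ler_pdivlMr //; lra.
Qed.

Lemma powR_bernoulli_le0 r z : r <= 0 -> 0 < z -> 1 + r * (z - 1) <= z `^ r.
Proof.
move=> r0 z0.
have ln_le : ln z <= z - 1 by have := @le_ln1Dx R (z - 1); rewrite subrKC; apply; lra.
rewrite -(lnK z0) -expRM (lnK z0); apply: le_trans (expR_ge1Dx _).
by rewrite mulrC lerD2l ler_wnM2r.
Qed.

Lemma invr_powR x r : 0 <= x -> x^-1 `^ r = x `^ (- r).
Proof. by move=> x0; rewrite -powR_inv1 // -powRrM mulN1r. Qed.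

Lemma powR_tangentE r x y : 0 < x -> 0 <= y ->
  x `^ r + r * x `^ (r - 1) * (y - x) = x `^ r * (1 + r * (y / x - 1)) /\
  y `^ r = x `^ r * (y / x) `^ r.
Proof.
move=> x0 y0; split.
  by rewrite powRB ?(gt_eqF x0) ?implybT // powRr1 ?ltW //; field; rewrite (gt_eqF x0).
by rewrite mulrC -powRM ?divfK ?gt_eqF ?divr_ge0 // ltW.
Qed.

Lemma powR_tangent_ge1 r x y : 1 <= r -> 0 < x -> 0 <= y ->
  x `^ r + r * x `^ (r - 1) * (y - x) <= y `^ r.
Proof.
move=> r1 x0 y0; have [-> ->] := powR_tangentE r x y x0 y0.
by rewrite ler_wpM2l ?powR_ge0 // powR_bernoulli_ge1 // divr_ge0 // ltW.
Qed.

Lemma powR_tangent_le0 r x y : r <= 0 -> 0 < x -> 0 < y ->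
  x `^ r + r * x `^ (r - 1) * (y - x) <= y `^ r.
Proof.
move=> r0 x0 y0; have [-> ->] := powR_tangentE r x y x0 (ltW y0).
by rewrite ler_wpM2l ?powR_ge0 // powR_bernoulli_le0 // divr_gt0.
Qed.

Lemma ler_powR_le0 r x y : r <= 0 -> 0 < x -> x <= y -> y `^ r <= x `^ r.
Proof.
move=> r0 x0 xy; have y0 := lt_le_trans x0 xy.
rewrite -[r]opprK (powRN x) (powRN y) lef_pV2 ?posrE ?powR_gt0 //.
by apply: ge0_ler_powR; rewrite ?oppr_ge0 // nnegrE ltW.
Qed.

Lemma chord_le_powR r a x : r <= 1 -> 0 < a -> 0 <= x <= a ->
  a `^ (r - 1) * x <= x `^ r.
Proof.
move=> r1 a0 /andP[x0 xa]; have [->|xn0] := eqVneq x 0; first by rewrite mulr0 powR_ge0.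
have xp : 0 < x by rewrite lt_def xn0.
have -> : x `^ r = x `^ (r - 1) * x `^ 1 by rewrite -powRD ?subrK // xn0 implybT.
by rewrite powRr1 ?ler_wpM2r // ?ler_powR_le0 // ?subr_le0 // ltW.
Qed.

Lemma mul_inv_powR c x r : 0 <= c -> 0 < x ->
  x * (c * x)^-1 `^ r = c^-1 `^ r * x `^ (1 - r).
Proof.
move=> c0 x0; rewrite invfM powRM ?invr_ge0 ?c0 ?(ltW x0) // mulrCA; congr (_ * _).
rewrite invr_powR ?ltW // addrC powRD ?(gt_eqF x0) ?implybT //.
by rewrite powRr1 ?ltW // mulrC.
Qed.

Lemma powR_mean_le_sum (I : finType) (P : pred I) (x : I -> R) r :
  1 <= r -> (0 < #|P|)%N -> (forall i, P i -> 0 <= x i) ->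
  #|P|%:R * ((\sum_(i | P i) x i) / #|P|%:R) `^ r <= \sum_(i | P i) x i `^ r.
Proof.
move=> r1 P0 x0; set n := #|P|%:R; set s := \sum_(i | P i) x i.
have n0 : 0 < n by rewrite ltr0n.
have s0 : 0 <= s by rewrite sumr_ge0.
have sum_const c : \sum_(i | P i) c = n * c by rewrite sumr_const mulr_natl.
have [s_eq0|sn0] := eqVneq s 0.
  rewrite s_eq0 mul0r powR0 ?mulr0; last by rewrite gt_eqF // (lt_le_trans ltr01).
  by apply: sumr_ge0 => i _; exact: powR_ge0.
have t0 : 0 < s / n by rewrite divr_gt0 // lt_def sn0.
have tangents : \sum_(i | P i) ((s / n) `^ r + r * (s / n) `^ (r - 1) * (x i - s / n))
    <= \sum_(i | P i) x i `^ r.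
  by apply: ler_sum => i Pi; exact: powR_tangent_ge1 r (s / n) (x i) r1 t0 (x0 i Pi).
apply: le_trans tangents.
rewrite big_split /= -mulr_sumr sumrB !sum_const -/s mulrCA divff ?gt_eqF //.
by rewrite mulr1 subrr mulr0 addr0.
Qed.

Lemma balanced_powR_le g (m M p q : nat) :
  g <= 0 -> (0 < m)%N -> (m <= M <= m.+1)%N ->
  (0 < p)%N -> (0 < q)%N -> (p + q = m + M)%N ->
  m%:R `^ g + M%:R `^ g <= p%:R `^ g + q%:R `^ g :> R.
Proof.
move=> g0 m0 /andP[mM Mm].
wlog pq : p q / (p <= q)%N => [hwlog|] p0 q0 pqmM.
  have [/hwlog|/ltnW/hwlog] := leqP p q; first exact.
  by rewrite [X in _ <= X]addrC; apply; rewrite // addnC.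
have pm : (p <= m)%N by lia.
have M0 : (0 < M)%N by lia.
have pos n : (0 < n)%N -> 0 < n%:R :> R by rewrite ltr0n.
have := powR_tangent_le0 g m%:R p%:R g0 (pos m m0) (pos p p0).
have := powR_tangent_le0 g M%:R q%:R g0 (pos M M0) (pos q q0).
(* the tangent slopes at [m <= M] compare, and the two displacements cancel *)
have slope : g * m%:R `^ (g - 1) <= g * M%:R `^ (g - 1).
  by rewrite ler_wnM2l // ler_powR_le0 ?ltr0n ?ler_nat // lerBlDr; lra.
have qM : q%:R - M%:R = - (p%:R - m%:R) :> R.
  by have := congr1 (GRing.natmul (1 : R)) pqmM; rewrite !natrD; lra.
have pm' : p%:R - m%:R <= 0 :> R by rewrite subr_le0 ler_nat.
rewrite qM; nra.
Qed.

End PowerInequalities.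

Lemma card_gt0_sum_neq0 (I : finType) (V : nmodType) (P : pred I) (F : I -> V) :
  \sum_(i | P i) F i != 0 -> (0 < #|P|)%N.
Proof.
apply: contraNT; rewrite -leqNgt leqn0 => /eqP/card0_eq P0.
by rewrite big_pred0 // => i; have := P0 i; rewrite !inE.
Qed.

Lemma half_add_uphalf n : (n./2 + uphalf n = n)%N.
Proof. by rewrite uphalf_half addnCA addnn odd_double_half. Qed.

Section SimplexTK.
Variables (R : realType) (K : nat).
Implicit Types (v : 'I_K -> R) (beta : R).

Lemma sum_ord_threshold m (a b : R) : (m <= K)%N ->
  \sum_(k < K) (if (k < m)%N then a else b) = m%:R * a + (K - m)%:R * b.
Proof.
move=> mK; rewrite -(big_mkord xpredT (fun k => if (k < m)%N then a else b)).
rewrite (big_cat_nat (leq0n m) mK) /=.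
rewrite (@eq_big_nat _ _ _ 0 m _ (fun=> a)); last by move=> i /andP[_ ->].
rewrite (@eq_big_nat _ _ _ m K _ (fun=> b)); last first.
  by move=> i /andP[]; rewrite leqNgt => /negbTE ->.
by rewrite !sumr_const_nat subn0 !mulr_natl.
Qed.

Lemma sum_vbig (f : R -> R) : \sum_(k < K) f (vbig R K k) =
  (K./2)%:R * f ((2 * (K./2)%:R)^-1) + (uphalf K)%:R * f (- (2 * (uphalf K)%:R)^-1).
Proof.
have half_le : (K./2 <= K)%N by rewrite -{2}(half_add_uphalf K) leq_addr.
have sub_half : (K - K./2)%N = uphalf K by rewrite -{1}(half_add_uphalf K) addKn.
rewrite -sub_half -[in RHS]sum_ord_threshold // sub_half.
by apply: eq_bigr => k _; rewrite /vbig; case: (k < K./2)%N.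
Qed.

Lemma TK_halves v : v \in TK R K ->
  \sum_(k | 0 < v k) `|v k| = 2^-1 /\ \sum_(k | ~~ (0 < v k)) `|v k| = 2^-1.
Proof.
move=> /set_mem[norm1 sum0].
have pos_part : \sum_(k | 0 < v k) `|v k| = \sum_(k | 0 < v k) v k.
  by apply: eq_bigr => k vk; rewrite gtr0_norm.
have neg_part : \sum_(k | ~~ (0 < v k)) `|v k| = - \sum_(k | ~~ (0 < v k)) v k.
  by rewrite -sumrN; apply: eq_bigr => k; rewrite -leNgt => vk; rewrite ler0_norm.
rewrite (bigID (fun k => 0 < v k)) /= in norm1.
rewrite (bigID (fun k => 0 < v k)) /= in sum0.
by rewrite pos_part neg_part in norm1 *; split; lra.
Qed.

Lemma TK_norm_le_half v k : v \in TK R K -> `|v k| <= 2^-1.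
Proof.
move=> /TK_halves[pos_half neg_half]; have sum_ge0 P : 0 <= \sum_(i | P i) `|v i|.
  by apply: sumr_ge0 => i _.
case: (boolP (0 < v k)) => vk.
  by rewrite -pos_half (bigD1 k) //= lerDl sum_ge0.
by rewrite -neg_half (bigD1 k) //= lerDl sum_ge0.
Qed.

Lemma ler_bnorm beta u v : 0 < beta ->
  \sum_(k < K) `|u k| `^ beta <= \sum_(k < K) `|v k| `^ beta ->
  bnorm R K beta u <= bnorm R K beta v.
Proof.
move=> beta0 le_uv; apply: ge0_ler_powR => //; first by rewrite invr_ge0 ltW.
  by rewrite nnegrE sumr_ge0 // => k _; rewrite powR_ge0.
by rewrite nnegrE sumr_ge0 // => k _; rewrite powR_ge0.
Qed.

Hypothesis K_ge2 : (2 <= K)%N.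

Lemma sum_vsmall (f : R -> R) : f 0 = 0 ->
  \sum_(k < K) f (vsmall R K k) = f (- 2^-1) + f 2^-1.
Proof.
move=> f0; case: K K_ge2 => [|[|K']] // _.
by rewrite !big_ord_recl big1 ?addr0 // => k _; rewrite /vsmall /= f0.
Qed.

Lemma vsmall_TK : vsmall R K \in TK R K.
Proof.
apply/mem_set; split; last by rewrite (sum_vsmall id) // addNr.
by rewrite (sum_vsmall (fun x => `|x|)) ?normr0 // normrN ger0_norm //; lra.
Qed.

Lemma sum_powR_vsmall beta : 0 < beta ->
  \sum_(k < K) `|vsmall R K k| `^ beta = 2 `^ (1 - beta).
Proof.
move=> beta0; rewrite (sum_vsmall (fun x => `|x| `^ beta)) //; last first.
  by rewrite normr0 powR0 // gt_eqF.
rewrite normrN ger0_norm // invr_powR // [RHS]powRD ?pnatr_eq0 ?implybT //.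
by rewrite powRr1 // mulr_natl mulr2n.
Qed.

Lemma bnorm_vsmall beta : 0 < beta ->
  bnorm R K beta (vsmall R K) = 2 `^ (beta^-1 - 1).
Proof.
move=> beta0; rewrite /bnorm sum_powR_vsmall // -powRrM.
by congr (_ `^ _); field; rewrite gt_eqF.
Qed.

Lemma sum_powR_TK_ge_small beta v : beta <= 1 -> v \in TK R K ->
  2 `^ (1 - beta) <= \sum_(k < K) `|v k| `^ beta.
Proof.
move=> beta1 vT; have /set_mem[norm1 _] := vT.
have chord k : 2 `^ (1 - beta) * `|v k| <= `|v k| `^ beta.
  by rewrite -opprB -invr_powR // chord_le_powR // normr_ge0 TK_norm_le_half.
by apply: le_trans (ler_sum _ (fun k _ => chord k)); rewrite -mulr_sumr norm1 mulr1.
Qed.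

Lemma halves_gt0_balanced :
  [/\ (0 < K./2)%N, (0 < uphalf K)%N & (K./2 <= uphalf K <= (K./2).+1)%N].
Proof.
rewrite half_gt0 uphalf_gt0 uphalf_half K_ge2 (ltn_trans _ K_ge2) //.
by case: (odd K); rewrite leqnn ?leqnSn.
Qed.

Lemma vbig_TK : vbig R K \in TK R K.
Proof.
have [+ + _] := halves_gt0_balanced; rewrite -!(ltr0n R) => m0 M0.
apply/mem_set; split; last by rewrite (sum_vbig id); field; rewrite !gt_eqF.
rewrite (sum_vbig (fun x => `|x|)) normrN !ger0_norm ?invr_ge0 ?mulr_ge0 ?ler0n //.
by field; rewrite !gt_eqF.
Qed.

Lemma sum_powR_vbig beta : \sum_(k < K) `|vbig R K k| `^ beta =
  2^-1 `^ beta * ((K./2)%:R `^ (1 - beta) + (uphalf K)%:R `^ (1 - beta)).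
Proof.
have [+ + _] := halves_gt0_balanced; rewrite -!(ltr0n R) => m0 M0.
rewrite (sum_vbig (fun x => `|x| `^ beta)) normrN !ger0_norm ?invr_ge0 ?mulr_ge0 ?ler0n //.
by rewrite !mul_inv_powR // mulrDr.
Qed.

Lemma bnorm_vbig beta : 0 < beta -> bnorm R K beta (vbig R K) =
  2^-1 * (((K./2)%:R `^ (1 - beta) + (uphalf K)%:R `^ (1 - beta)) `^ beta^-1).
Proof.
move=> beta0; rewrite /bnorm sum_powR_vbig powRM ?powR_ge0 ?addr_ge0 //.
by rewrite -powRrM mulfV ?gt_eqF // powRr1.
Qed.

Lemma sum_powR_TK_ge_big beta v : 1 <= beta -> v \in TK R K ->
  2^-1 `^ beta * ((K./2)%:R `^ (1 - beta) + (uphalf K)%:R `^ (1 - beta))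
    <= \sum_(k < K) `|v k| `^ beta.
Proof.
move=> beta1 vT; have [pos_half neg_half] := TK_halves v vT.
have [m0 _ /andP[mM Mm]] := halves_gt0_balanced.
have half_neq0 : 2^-1 != 0 :> R by rewrite invr_eq0 pnatr_eq0.
pose P k := 0 < v k.
have p0 : (0 < #|P|)%N.
  by apply: (card_gt0_sum_neq0 _ _ _ (fun k => `|v k|)); rewrite pos_half.
have q0 : (0 < #|predC P|)%N.
  by apply: (card_gt0_sum_neq0 _ _ _ (fun k => `|v k|)); rewrite neg_half.
have mean_bound (Q : pred 'I_K) : (0 < #|Q|)%N -> \sum_(k | Q k) `|v k| = 2^-1 ->
    2^-1 `^ beta * #|Q|%:R `^ (1 - beta) <= \sum_(k | Q k) `|v k| `^ beta.
  move=> Q0 Q_half.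
  have := powR_mean_le_sum _ Q (fun k => `|v k|) beta beta1 Q0 (fun k _ => normr_ge0 _).
  by rewrite Q_half -invfM mul_inv_powR // ltr0n.
rewrite (bigID P) /=.
apply: le_trans (lerD (mean_bound _ p0 pos_half) (mean_bound _ q0 neg_half)).
rewrite -mulrDr ler_wpM2l ?powR_ge0 // balanced_powR_le ?mM ?subr_le0 //.
by rewrite half_add_uphalf cardC card_ord.
Qed.

End SimplexTK.

Theorem lemma2 (R : realType) (K : nat) (hK : (2 <= K)%N) :
  (forall beta : R, 0 < beta -> beta < 1 ->
     vsmall R K \in TK R K /\
     bnorm R K beta (vsmall R K) = 2 `^ (beta^-1 - 1) /\
     (forall v, v \in TK R K -> bnorm R K beta (vsmall R K) <= bnorm R K beta v)) /\
  (forall beta : R, 1 < beta ->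
     vbig R K \in TK R K /\
     bnorm R K beta (vbig R K) =
       2^-1 * (((K./2)%:R `^ (1 - beta) + (uphalf K)%:R `^ (1 - beta)) `^ (beta^-1)) /\
     (forall v, v \in TK R K -> bnorm R K beta (vbig R K) <= bnorm R K beta v)).
Proof.
split=> beta => [beta0 beta_lt1 | beta_gt1].
- split; first exact: vsmall_TK.
  split; first exact: bnorm_vsmall.
  move=> v vT; apply: ler_bnorm => //.
  by rewrite sum_powR_vsmall // sum_powR_TK_ge_small // ltW.
- have beta0 : 0 < beta := lt_trans ltr01 beta_gt1.
  split; first exact: vbig_TK.
  split; first exact: bnorm_vbig.
  move=> v vT; apply: ler_bnorm => //.
  by rewrite sum_powR_vbig // (sum_powR_TK_ge_big _ _ hK) // ltW.
Qed.
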